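(* (i) The Hamming distance $d$ is an integer-valued metric on $\mathscr P$. (ii) For all $\lambda,\mu\in\mathscr P$, $d(\lambda,\mu)=\frac12|S_\lambda\,\Delta\,S_\mu|$. (iii) If $|\lambda|=|\mu|$, then $d(\lambda,\mu)\ne1$. (iv) For every integer $k\ge0$, if $d(\lambda,\mu)=2k$, then $|S_\lambda\setminus S_\mu|=2k=|S_\mu\setminus S_\lambda|$.
   Context: $\mathscr P$ is the set of all integer partitions, $|\lambda|$ the size, $\lambda'$ the transpose. Modified Frobenius coordinates: if $d$ is the number of $i\ge1$ with $\lambda_i\ge i$, put $c_i=\lambda_i-i+\frac12$ and $c_i^*=-(\lambda'_i-i)-\frac12$ for $i=1,\dots,d$, and $C_\lambda=\{c_1,\dots,c_d,c_1^*,\dots,c_d^*\}\subset\mathbb Z+\frac12$. The Hamming distance is $d(\lambda,\mu)=\frac12|C_\lambda\,\Delta\,C_\mu|$, where $X\,\Delta\,Y=(X\cup Y)\setminus(X\cap Y)$. Also $S_\lambda=\{\lambda_j-j+\frac12: j\ge1\}$ (with $\lambda_j=0$ for $j$ larger than the length). *)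

From HB Require Import structures.
From mathcomp Require Import all_boot all_order all_algebra.
From mathcomp Require Import finmap.
Set Implicit Arguments. Unset Strict Implicit. Unset Printing Implicit Defensive.
Import Order.TTheory GRing.Theory Num.Theory.
Local Open Scope ring_scope.
Local Open Scope fset_scope.

(* A partition is a finite weakly decreasing sequence of positive naturals
   lambda = [:: lambda_1; lambda_2; ...]; this representation is unique. *)
Definition is_partition (l : seq nat) : bool :=
  sorted geq l && all (fun x => 0 < x)%N l.

(* lambda_i for i >= 1 (0 beyond the length) *)
Definition part (l : seq nat) (i : nat) : nat := nth 0%N l i.-1.

Definition conjp (l : seq nat) (i : nat) : nat := count (fun x => i <= x)%N l.

Definition psize (l : seq nat) : nat := sumn l.

(* d = number of i >= 1 with lambda_i >= i (all such i are <= length) *)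
Definition durfee (l : seq nat) : nat :=
  count (fun i => i <= part l i)%N (iota 1 (size l)).

Definition frob_c (l : seq nat) (i : nat) : rat :=
  (((part l i)%:Z - i%:Z)%:~R + 1 / 2)%R.
Definition frob_cstar (l : seq nat) (i : nat) : rat :=
  (- ((conjp l i)%:Z - i%:Z)%:~R - 1 / 2)%R.

Definition Cset (l : seq nat) : {fset rat} :=
  [fset frob_c l i | i in iota 1 (durfee l)]
  `|` [fset frob_cstar l i | i in iota 1 (durfee l)].

Definition hamming (l m : seq nat) : rat :=
  ((#|` (Cset l `\` Cset m) `|` (Cset m `\` Cset l)|)%:R / 2)%R.

Definition Sset (l : seq nat) (x : rat) : Prop :=
  exists2 j : nat, (1 <= j)%N & x = (((part l j)%:Z - j%:Z)%:~R + 1 / 2)%R.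

Definition has_card (P : rat -> Prop) (n : nat) : Prop :=
  exists s : seq rat, uniq s /\ size s = n /\ (forall x, P x <-> x \in s).

(* Write half-integers as z + 1/2 and put A_l = {l_j - j : j >= 1}, so that
   S_l = A_l + 1/2.  The integers outside A_l are exactly the i - 1 - l'_i
   (i >= 1), and C_l - 1/2 consists of the nonnegative elements of A_l and the
   negative integers outside A_l; hence C_l Δ C_m = S_l Δ S_m, which is (ii).
   For N at least the lengths of l and m, A_l contains every integer below -N
   and exactly N integers >= -N, the l_k - k for k <= N.  So A_l \ A_m and
   A_m \ A_l are the two differences of a pair of N-element sets and have the
   same size: this gives (iv) and integrality, and d = 0 forces the two
   N-element sets, hence l and m, to coincide.  If both differences are
   singletons {x} and {y}, summing l_k - k and m_k - k over k <= N gives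
   |l| - |m| = x - y, so |l| = |m| would force x = y, which is absurd. *)

From mathcomp Require Import all_boot all_order all_algebra.
From mathcomp Require Import finmap.
From mathcomp Require Import zify lra.
Set Implicit Arguments. Unset Strict Implicit. Unset Printing Implicit Defensive.
Import Order.TTheory GRing.Theory Num.Theory.
Local Open Scope fset_scope.
Local Open Scope ring_scope.

Lemma count_iota_downclosed (P : pred nat) n i :
    (forall j k, (0 < j <= k)%N -> P k -> P j) -> (0 < i <= n)%N ->
  (i <= count P (iota 1 n))%N = P i.
Proof.
move=> P_down /andP[i_gt0 le_in].
rewrite -(subnKC le_in) iotaD count_cat.
case Pi: (P i).
  have -> : count P (iota 1 i) = i.
    apply/eqP; rewrite -{2}(size_iota 1 i) -all_count; apply/allP => j.
    by rewrite mem_iota => /andP[j_gt0 lt_ji]; apply: (P_down j i) => //; lia.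
  by rewrite leq_addr.
have -> : count P (iota (1 + i) (n - i)) = 0%N.
  apply/eqP; rewrite -leqn0 leqNgt -has_count; apply/hasPn => j.
  rewrite mem_iota => /andP[lt_ij _]; apply/negP => Pj.
  by move: Pi; rewrite (P_down i j) //; lia.
have lt_cnt : (count P (iota 1 i) < i)%N.
  rewrite -[X in (_ < X)%N](size_iota 1 i) -(count_predC P) -addn1 leq_add2l -has_count.
  by apply/hasP; exists i; rewrite /= ?Pi // mem_iota; lia.
by rewrite addn0 leqNgt lt_cnt.
Qed.

Definition fsymdiff (K : choiceType) (A B : {fset K}) : {fset K} := (A `\` B) `|` (B `\` A).

Lemma card_fsymdiff_triangle (K : choiceType) (A B C : {fset K}) :
  (#|` fsymdiff A C| <= #|` fsymdiff A B| + #|` fsymdiff B C|)%N.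
Proof.
apply: leq_trans (leq_card_fsetU _ _).1; apply/fsubset_leq_card/fsubsetP => x.
by rewrite !in_fsetU !in_fsetD; case: (x \in A); case: (x \in B); case: (x \in C).
Qed.

Lemma size_filter_notin_sym (T : eqType) (s t : seq T) :
    uniq s -> uniq t -> size s = size t ->
  size [seq x <- s | x \notin t] = size [seq x <- t | x \notin s].
Proof.
move=> s_uniq t_uniq eq_size.
have common : count (mem t) s = count (mem s) t.
  rewrite -!size_filter; apply/perm_size/uniq_perm; rewrite ?filter_uniq // => x.
  by rewrite !mem_filter andbC.
apply/eqP; rewrite !size_filter -(eqn_add2l (count (mem t) s)) {2}common.
by rewrite !count_predC eq_size.
Qed.

Lemma big_filter_notin_sym (R : zmodType) (T : eqType) (s t : seq T) (F : T -> R) :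
    uniq s -> uniq t ->
  \sum_(x <- s) F x - \sum_(x <- t) F x =
  \sum_(x <- [seq x <- s | x \notin t]) F x - \sum_(x <- [seq x <- t | x \notin s]) F x.
Proof.
move=> s_uniq t_uniq; rewrite (bigID (mem t)) [X in _ - X](bigID (mem s)) /= !big_filter.
have -> : \sum_(x <- s | x \in t) F x = \sum_(x <- t | x \in s) F x.
  rewrite -[LHS]big_filter -[RHS]big_filter; apply/perm_big/uniq_perm => [||x].
  - by rewrite filter_uniq.
  - by rewrite filter_uniq.
  by rewrite !mem_filter andbC.
by rewrite opprD addrACA subrr add0r.
Qed.

Lemma has_card_or (P Q : rat -> Prop) a b :
    has_card P a -> has_card Q b -> (forall x, P x -> ~ Q x) ->
  has_card (fun x => P x \/ Q x) (a + b).
Proof.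
move=> [s [s_uniq [<- memP]]] [t [t_uniq [<- memQ]]] PnQ.
exists (s ++ t); split; [|split].
- rewrite cat_uniq s_uniq t_uniq andbT /=; apply/hasPn => x /memQ Qx.
  by apply/negP => /memP /PnQ.
- by rewrite size_cat.
- by move=> x; rewrite mem_cat memP memQ; split => /orP.
Qed.

Lemma sum_nth_iota (s : seq nat) N : (size s <= N)%N ->
  (\sum_(k <- iota 0 N) nth 0%N s k)%N = sumn s.
Proof.
move=> le_sN; have -> : iota 0 N = index_iota 0 N by rewrite /index_iota subn0.
rewrite sumnE [in RHS](big_nth 0%N) (big_cat_nat (leq0n _) le_sN) /=.
rewrite [X in (_ + X)%N]big1_seq ?addn0 //.
by move=> k; rewrite mem_index_iota => /= /andP[le_sk _]; apply: nth_default.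
Qed.

Lemma eq_from_nth0 (s t : seq nat) :
    all (fun x => 0 < x)%N s -> all (fun x => 0 < x)%N t -> nth 0%N s =1 nth 0%N t ->
  s = t.
Proof.
have pos_nth u k : all (fun x => 0 < x)%N u -> (k < size u)%N = (0 < nth 0%N u k)%N.
  move=> /allP u_pos; case: ltnP => [lt_ku | le_uk]; last by rewrite nth_default.
  by rewrite u_pos ?mem_nth.
have le_size u v : all (fun x => 0 < x)%N u -> all (fun x => 0 < x)%N v ->
    nth 0%N u =1 nth 0%N v -> (size v <= size u)%N.
  by move=> u_pos v_pos eq_uv; rewrite leqNgt (pos_nth v) // -eq_uv -(pos_nth u) // ltnn.
move=> s_pos t_pos eq_st.
have eq_size : size s = size t.
  by apply/eqP; rewrite eqn_leq; apply/andP; split; apply: le_size.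
by apply: (eq_from_nth eq_size) => k _; apply: eq_st.
Qed.

Definition shift_half (z : int) : rat := z%:~R + 1 / 2.

Lemma shift_half_inj : injective shift_half.
Proof. by move=> a b /addIr /intr_inj. Qed.

Definition maya (l : seq nat) (z : int) : Prop :=
  exists2 j : nat, (0 < j)%N & z = (part l j)%:Z - j%:Z.

Definition comaya (l : seq nat) (i : nat) : int := i%:Z - 1 - (conjp l i)%:Z.

Lemma frob_cstarE l i : frob_cstar l i = shift_half (comaya l i).
Proof. rewrite /frob_cstar /shift_half /comaya !intrD !intrN; lra. Qed.

Lemma Sset_maya l z : Sset l (shift_half z) <-> maya l z.
Proof. by split=> -[j j_gt0 ez]; exists j => //; [apply: shift_half_inj | rewrite ez]. Qed.

Lemma Sset_shift_half l x : Sset l x -> exists z, x = shift_half z.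
Proof. by case=> j _ ->; eexists. Qed.

Lemma CsetP l x : reflect
  (exists2 i : nat, (0 < i <= durfee l)%N &
     x = shift_half ((part l i)%:Z - i%:Z) \/ x = shift_half (comaya l i))
  (x \in Cset l).
Proof.
rewrite in_fsetU; apply: (iffP orP).
  by case=> /imfsetP [i /=]; rewrite mem_iota => i_range ->; exists i;
    rewrite -?frob_cstarE; try lia; [left | right].
case=> i i_range [->|->]; [left|right]; apply/imfsetP; exists i;
  rewrite ?frob_cstarE // mem_iota; lia.
Qed.

Lemma Cset_shift_half l x : x \in Cset l -> exists z, x = shift_half z.
Proof. by case/CsetP => i _ [->|->]; eexists. Qed.

Definition maya_trunc (l : seq nat) (N : nat) : seq int :=
  [seq (nth 0%N l k)%:Z - k.+1%:Z | k <- iota 0 N].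

Lemma maya_trunc_ge l N z : z \in maya_trunc l N -> - N%:Z <= z.
Proof. by case/mapP => k; rewrite mem_iota => /andP[_ lt_kN] ->; lia. Qed.

Lemma maya_truncP l N z : (size l <= N)%N ->
  reflect (maya l z) ((z < - N%:Z) || (z \in maya_trunc l N)).
Proof.
move=> le_lN; apply: (iffP orP) => [[z_lt | /mapP[k]] | [j j_gt0 ->]].
- by exists (absz z); [lia | rewrite /part nth_default; lia].
- by rewrite mem_iota => /andP[_ lt_kN] ->; exists k.+1.
case: (leqP j N) => [le_jN | lt_Nj]; last by left; rewrite /part nth_default; lia.
by right; apply/mapP; exists j.-1; [rewrite mem_iota; lia | rewrite /part prednK].
Qed.

Section SortedSeq.

Variable l : seq nat.
Hypothesis l_sorted : sorted geq l.

Lemma nth_sorted_geq i j : (i <= j)%N -> (nth 0%N l j <= nth 0%N l i)%N.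
Proof.
move=> le_ij; case: (ltnP j (size l)) => lt_jl; last by rewrite nth_default.
by apply: (sorted_leq_nth (rev_trans leq_trans) (@leqnn) 0 l_sorted); rewrite ?inE //;
  apply: leq_ltn_trans lt_jl.
Qed.

Lemma ltn_conjp i k : (0 < i)%N -> (k < conjp l i)%N = (i <= nth 0%N l k)%N.
Proof.
move=> i_gt0; elim: l l_sorted k => [|x s IHs] /= sorted_xs k.
  by rewrite nth_nil ltn0 leqn0 gtn_eqF.
have sorted_s : sorted geq s := path_sorted sorted_xs.
have le_sx : all (fun y => y <= x)%N s := order_path_min (rev_trans leq_trans) sorted_xs.
case: (leqP i x) => [le_ix | lt_xi]; first by case: k => [|k] //=; rewrite add1n ltnS IHs.
have lt_si y : y \in s -> (y < i)%N by move=> /(allP le_sx) /leq_ltn_trans; apply.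
have -> : conjp s i = 0%N.
  by apply/eqP; rewrite -leqn0 leqNgt -has_count; apply/hasPn => y /lt_si; rewrite ltnNge.
case: k => [|k] /=; first by rewrite [(i <= x)%N]leqNgt lt_xi.
rewrite ltn0; apply/esym/negbTE; rewrite -ltnNge.
case: (ltnP k (size s)) => [lt_ks | le_sk]; first exact/lt_si/mem_nth.
by rewrite nth_default.
Qed.

Lemma leq_conjp_diag i : (0 < i)%N -> (i <= conjp l i)%N = (i <= part l i)%N.
Proof. by move=> i_gt0; rewrite /part -ltn_conjp // prednK. Qed.

Lemma leq_durfee i : (0 < i)%N -> (i <= durfee l)%N = (i <= part l i)%N.
Proof.
move=> i_gt0.
have diag_down j k : (0 < j <= k)%N -> (k <= part l k)%N -> (j <= part l j)%N.
  move=> /andP[j_gt0 le_jk]; rewrite /part => le_k.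
  have := nth_sorted_geq (_ : j.-1 <= k.-1)%N; lia.
case: (leqP i (size l)) => [le_il | lt_li].
  by rewrite /durfee (count_iota_downclosed diag_down) ?i_gt0.
have -> : part l i = 0%N by rewrite /part nth_default //; lia.
have : (durfee l <= size l)%N by rewrite -[X in (_ <= X)%N](size_iota 1 (size l)) count_size.
lia.
Qed.

Lemma comaya_notin_maya i : (0 < i)%N -> ~ maya l (comaya l i).
Proof.
move=> i_gt0 [j j_gt0]; rewrite /comaya /part => eq_ij.
have := ltn_conjp j.-1 i_gt0.
case: (leqP i (nth 0%N l j.-1)) => cmp_i; [move=> /idP | move=> /negbT]; lia.
Qed.

Lemma maya_or_comaya z : maya l z \/ exists2 i, (0 < i)%N & z = comaya l i.
Proof.
(* Take the first k0 with l_(k0+1) - (k0+1) <= z; if the inequality is strict,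
   z = i - 1 - l'_i for i = z + k0 + 1, whose column has length exactly k0. *)
pose below k := ((nth 0%N l k)%:Z - k.+1%:Z <= z).
have below_ex : exists k, below k.
  by exists (size l + `|z|)%N; rewrite /below nth_default ?leq_addr //; lia.
case: (ex_minnP below_ex) => k0; rewrite {1}/below le_eqVlt => /orP[/eqP eq_z | lt_z] min_k0.
  by left; exists k0.+1.
have i_gt0 : (0 < absz (z + k0.+1%:Z)%R)%N by lia.
right; exists (absz (z + k0.+1%:Z)) => //; move: i_gt0; set i := absz _ => i_gt0.
have i_def : i%:Z = z + k0.+1%:Z by rewrite /i gez0_abs //; lia.
have le_conj : (conjp l i <= k0)%N by rewrite leqNgt ltn_conjp // -ltnNge; lia.
have ge_conj : (k0 <= conjp l i)%N.
  case: (posnP k0) => [-> // | k0_gt0].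
  have : ~~ below k0.-1 by apply/negP => /min_k0; lia.
  rewrite /below -ltNge => lt_prev.
  by have := ltn_conjp k0.-1 i_gt0; rewrite prednK // => ->; lia.
rewrite /comaya; lia.
Qed.

Lemma Cset_maya z :
  shift_half z \in Cset l <-> if 0 <= z then maya l z else ~ maya l z.
Proof.
split.
  case/CsetP => i /andP[i_gt0 le_id] [/shift_half_inj -> | /shift_half_inj ->].
    rewrite leq_durfee // in le_id.
    by case: ifP => [_ | /negbT]; [exists i | lia].
  rewrite leq_durfee // -leq_conjp_diag // in le_id.
  by case: ifP => [| _]; [rewrite /comaya; lia | apply: comaya_notin_maya].
case: ifP => [z_ge0 [j j_gt0 ez] | /negbT z_lt0 not_maya].
  by apply/CsetP; exists j; [rewrite j_gt0 leq_durfee //; lia | left; rewrite ez].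
have [//|[i i_gt0 ez]] := maya_or_comaya z.
apply/CsetP; exists i; last by right; rewrite ez.
by rewrite i_gt0 leq_durfee // -leq_conjp_diag //; move: z_lt0; rewrite ez /comaya; lia.
Qed.

Lemma maya_trunc_sorted N : sorted >%R (maya_trunc l N).
Proof.
rewrite sorted_map; apply: sub_sorted (iota_ltn_sorted 0 N) => i j /= lt_ij.
have := nth_sorted_geq (ltnW lt_ij); lia.
Qed.

Lemma maya_trunc_uniq N : uniq (maya_trunc l N).
Proof. by apply: (sorted_uniq _ _ (maya_trunc_sorted N)) => [? ? ?|?] /=; lia. Qed.

Lemma mem_Cset_trunc N z : (size l <= N)%N ->
  (shift_half z \in Cset l) =
  if 0 <= z then (z < - N%:Z) || (z \in maya_trunc l N)
  else ~~ ((z < - N%:Z) || (z \in maya_trunc l N)).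
Proof.
move=> le_lN; have [C_maya maya_C] := Cset_maya z.
case: ifP => z_sign in C_maya maya_C *; apply/idP/idP.
- by move/C_maya/(maya_truncP _ le_lN).
- by move/(maya_truncP _ le_lN)/maya_C.
- by move/C_maya => not_maya; apply/(maya_truncP _ le_lN).
- by move/(maya_truncP _ le_lN) => not_maya; apply: maya_C.
Qed.

End SortedSeq.

Lemma sum_maya_trunc l N : (size l <= N)%N ->
  \sum_(z <- maya_trunc l N) z = (psize l)%:Z - \sum_(k <- iota 0 N) k.+1%:Z.
Proof.
move=> le_lN; rewrite big_map sumrB -(big_morph Posz PoszD (erefl 0%:Z)).
by rewrite sum_nth_iota.
Qed.

Lemma nth_eq_of_maya_trunc_eq l m N : (size l <= N)%N -> (size m <= N)%N ->
  maya_trunc l N = maya_trunc m N -> nth 0%N l =1 nth 0%N m.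
Proof.
move=> le_lN le_mN eq_lm k; case: (ltnP k N) => [lt_kN | le_Nk].
  have := congr1 (fun s => nth 0 s k) eq_lm.
  by rewrite !(nth_map 0%N) ?size_iota // nth_iota // add0n; lia.
by rewrite !nth_default // (leq_trans _ le_Nk).
Qed.

Definition maya_diff l m N : seq int := [seq z <- maya_trunc l N | z \notin maya_trunc m N].

Section TwoSortedSeqs.

Variables (l m : seq nat) (N : nat).
Hypotheses (l_sorted : sorted geq l) (m_sorted : sorted geq m).
Hypotheses (le_lN : (size l <= N)%N) (le_mN : (size m <= N)%N).

Lemma mem_Csymdiff z : (shift_half z \in fsymdiff (Cset l) (Cset m)) =
  (z \in maya_diff l m N ++ maya_diff m l N).
Proof.
rewrite in_fsetU !in_fsetD (mem_Cset_trunc l_sorted _ le_lN) (mem_Cset_trunc m_sorted _ le_mN).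
rewrite mem_cat !mem_filter.
case: (boolP (z < - N%:Z)) => [z_lt | _] /=; last first.
  by case: ifP; case: (z \in maya_trunc l N); case: (z \in maya_trunc m N).
have /negPf-> : z \notin maya_trunc l N by apply/negP => /maya_trunc_ge; lia.
have /negPf-> : z \notin maya_trunc m N by apply/negP => /maya_trunc_ge; lia.
by case: ifP.
Qed.

Lemma size_maya_diff_sym : size (maya_diff l m N) = size (maya_diff m l N).
Proof.
by apply: size_filter_notin_sym; rewrite ?maya_trunc_uniq // !size_map !size_iota.
Qed.

Lemma card_Csymdiff :
  #|` fsymdiff (Cset l) (Cset m)| = (size (maya_diff l m N) + size (maya_diff m l N))%N.
Proof.
rewrite -size_cat -(size_map shift_half); apply/perm_size/uniq_perm => [|| x].
- exact: fset_uniq.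
- rewrite (map_inj_uniq shift_half_inj) cat_uniq !filter_uniq ?maya_trunc_uniq //= andbT.
  by apply/hasPn => z; rewrite !mem_filter => /andP[_ ->].
apply/idP/idP => [x_in | /mapP[z z_in ->]]; last by rewrite mem_Csymdiff.
have [z ex] : exists z, x = shift_half z.
  by move: x_in; rewrite in_fsetU !in_fsetD => /orP[] /andP[_] /Cset_shift_half.
by rewrite ex (mem_map shift_half_inj) -mem_Csymdiff -ex.
Qed.

Lemma hammingE : hamming l m = (size (maya_diff l m N))%:R.
Proof. by rewrite /hamming -/(fsymdiff _ _) card_Csymdiff -size_maya_diff_sym natrD; lra. Qed.

Lemma Sset_diffE x :
  Sset l x /\ ~ Sset m x <-> x \in map shift_half (maya_diff l m N).
Proof.
split=> [[Sl_x Sm_x] | /mapP[z]]; last first.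
  rewrite mem_filter => /andP[z_notin_m z_in_l] ->; split.
    by apply/Sset_maya/(maya_truncP _ le_lN); rewrite z_in_l orbT.
  move/Sset_maya/(maya_truncP _ le_mN); rewrite (negbTE z_notin_m) orbF.
  by move/maya_trunc_ge: z_in_l; lia.
have [z ex] := Sset_shift_half Sl_x; rewrite ex in Sl_x Sm_x *.
rewrite (mem_map shift_half_inj) mem_filter.
move/Sset_maya/(maya_truncP _ le_lN): Sl_x => /orP[z_lt | ->].
  by case: Sm_x; apply/Sset_maya/(maya_truncP _ le_mN); rewrite z_lt.
rewrite andbT; apply: contra_notN Sm_x => z_in.
by apply/Sset_maya/(maya_truncP _ le_mN); rewrite z_in orbT.
Qed.

Lemma has_card_Sset_diff :
  has_card (fun x => Sset l x /\ ~ Sset m x) (size (maya_diff l m N)).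
Proof.
exists (map shift_half (maya_diff l m N)); split; last split.
- by rewrite (map_inj_uniq shift_half_inj) filter_uniq ?maya_trunc_uniq.
- by rewrite size_map.
- by move=> x; apply: Sset_diffE.
Qed.

Lemma maya_trunc_eq_of_hamming0 : hamming l m = 0 -> maya_trunc l N = maya_trunc m N.
Proof.
rewrite hammingE => /eqP; rewrite pnatr_eq0 size_eq0 => /eqP diff_lm.
have /eqP diff_ml : maya_diff m l N == [::] by rewrite -size_eq0 -size_maya_diff_sym diff_lm.
apply: (irr_sorted_eq (leT := >%R)) => [? ? ? /=|? /=|||z]; try lia;
  rewrite ?maya_trunc_sorted //.
apply/idP/idP => z_in; apply: contraT => z_notin.
  have : z \in maya_diff l m N by rewrite mem_filter z_notin.
  by rewrite diff_lm.
have : z \in maya_diff m l N by rewrite mem_filter z_notin.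
by rewrite diff_ml.
Qed.

Lemma size_maya_diff_neq1 : psize l = psize m -> size (maya_diff l m N) <> 1%N.
Proof.
move=> eq_psize size_lm; have size_ml := size_maya_diff_sym; rewrite size_lm in size_ml.
case Dlm: (maya_diff l m N) size_lm => [|x []] // _.
case Dml: (maya_diff m l N) size_ml => [|y []] // _.
have := big_filter_notin_sym id (maya_trunc_uniq l_sorted N) (maya_trunc_uniq m_sorted N).
rewrite -/(maya_diff l m N) -/(maya_diff m l N) Dlm Dml !big_seq1.
rewrite !sum_maya_trunc // eq_psize subrr => /eqP; rewrite eq_sym subr_eq0 => /eqP eq_xy.
have : y \in maya_diff m l N by rewrite Dml mem_seq1.
have : x \in maya_diff l m N by rewrite Dlm mem_seq1.
by rewrite !mem_filter eq_xy => /andP[/negPf y_notin_m _] /andP[_]; rewrite y_notin_m.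
Qed.

End TwoSortedSeqs.

Lemma partition_sorted l : is_partition l -> sorted geq l.
Proof. by case/andP. Qed.

Lemma hamming_sym l m : hamming l m = hamming m l.
Proof. by rewrite /hamming fsetUC. Qed.

Lemma hamming_triangle l m p : hamming l p <= hamming l m + hamming m p.
Proof.
rewrite /hamming -!/(fsymdiff _ _) -mulrDl ler_pM2r // -natrD ler_nat.
exact: card_fsymdiff_triangle.
Qed.

Lemma hamming_nat l m : is_partition l -> is_partition m ->
  exists n : nat, hamming l m = n%:R.
Proof.
move=> /partition_sorted l_sorted /partition_sorted m_sorted.
by eexists; apply: hammingE l_sorted m_sorted (leq_addr _ _) (leq_addl _ _).
Qed.

Lemma hamming_eq0 l m : is_partition l -> is_partition m -> hamming l m = 0 <-> l = m.
Proof.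
move=> l_part m_part; split=> [ham0 | <-]; last first.
  by rewrite /hamming fsetDv fsetUid cardfs0 mul0r.
have le_lN := leq_addr (size m) (size l); have le_mN := leq_addl (size l) (size m).
apply: eq_from_nth0 (nth_eq_of_maya_trunc_eq le_lN le_mN _).
- by case/andP: l_part.
- by case/andP: m_part.
exact: maya_trunc_eq_of_hamming0 (partition_sorted l_part) (partition_sorted m_part)
  le_lN le_mN ham0.
Qed.

Lemma hamming_Sset_symdiff l m : is_partition l -> is_partition m ->
  exists2 N : nat,
    has_card (fun x => (Sset l x /\ ~ Sset m x) \/ (Sset m x /\ ~ Sset l x)) N
    & hamming l m = N%:R / 2.
Proof.
move=> /partition_sorted l_sorted /partition_sorted m_sorted.
have le_lN := leq_addr (size m) (size l); have le_mN := leq_addl (size l) (size m).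
eexists; last by rewrite /hamming -/(fsymdiff _ _) (card_Csymdiff l_sorted m_sorted le_lN le_mN).
apply: has_card_or (has_card_Sset_diff l_sorted m_sorted le_lN le_mN)
  (has_card_Sset_diff m_sorted l_sorted le_mN le_lN) _.
by move=> x [_ not_Sm_x] [Sm_x _].
Qed.

Lemma hamming_neq1 l m : is_partition l -> is_partition m ->
  psize l = psize m -> hamming l m <> 1.
Proof.
move=> /partition_sorted l_sorted /partition_sorted m_sorted eq_psize.
rewrite (hammingE l_sorted m_sorted (leq_addr _ _) (leq_addl _ _)) => /eqP.
rewrite pnatr_eq1 => /eqP.
exact: size_maya_diff_neq1 l_sorted m_sorted (leq_addr _ _) (leq_addl _ _) eq_psize.
Qed.

Lemma Sset_diff_card k l m : is_partition l -> is_partition m ->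
  hamming l m = (2 * k)%N%:R ->
  has_card (fun x => Sset l x /\ ~ Sset m x) (2 * k)
  /\ has_card (fun x => Sset m x /\ ~ Sset l x) (2 * k).
Proof.
move=> /partition_sorted l_sorted /partition_sorted m_sorted.
have le_lN := leq_addr (size m) (size l); have le_mN := leq_addl (size l) (size m).
rewrite (hammingE l_sorted m_sorted le_lN le_mN) => /eqP; rewrite eqr_nat => /eqP <-.
split; first exact: has_card_Sset_diff.
by rewrite size_maya_diff_sym //; apply: has_card_Sset_diff.
Qed.

Theorem lemma6 :
  (* (i) integer-valued metric on partitions *)
  ((forall l m, is_partition l -> is_partition m ->
      exists n : nat, hamming l m = n%:R)
   /\ (forall l m, is_partition l -> is_partition m ->
      (hamming l m = 0 <-> l = m))
   /\ (forall l m, is_partition l -> is_partition m ->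
      hamming l m = hamming m l)
   /\ (forall l m p, is_partition l -> is_partition m -> is_partition p ->
      hamming l p <= hamming l m + hamming m p))
  (* (ii) *)
  /\ (forall l m, is_partition l -> is_partition m ->
      exists2 N : nat,
        has_card (fun x => (Sset l x /\ ~ Sset m x) \/ (Sset m x /\ ~ Sset l x)) N
        & hamming l m = N%:R / 2)
  (* (iii) *)
  /\ (forall l m, is_partition l -> is_partition m ->
      psize l = psize m -> hamming l m <> 1)
  (* (iv) *)
  /\ (forall (k : nat) l m, is_partition l -> is_partition m ->
      hamming l m = (2 * k)%N%:R ->
      has_card (fun x => Sset l x /\ ~ Sset m x) (2 * k)
      /\ has_card (fun x => Sset m x /\ ~ Sset l x) (2 * k)).
Proof.
split; [split; [|split; [|split]] | split; [|split]].
- exact: hamming_nat.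
- exact: hamming_eq0.
- by move=> l m _ _; apply: hamming_sym.
- by move=> l m p _ _ _; apply: hamming_triangle.
- exact: hamming_Sset_symdiff.
- exact: hamming_neq1.
- exact: Sset_diff_card.
Qed.
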